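(* Let $\mathcal{M}$ be an $n$-abelian category and consider a commutative diagram in $\mathcal{M}$ with rows $X^0\xrightarrow{d_X^0}X^1\xrightarrow{d_X^1}X^2\xrightarrow{d_X^2}X^3\xrightarrow{d_X^3}X^4$ and $Y^0\xrightarrow{d_Y^0}Y^1\xrightarrow{d_Y^1}Y^2\xrightarrow{d_Y^2}Y^3\xrightarrow{d_Y^3}Y^4$ and vertical morphisms $f^i:X^i\to Y^i$ ($0\le i\le4$). Suppose $f^1$ and $f^3$ are isomorphisms, $f^0$ is an epimorphism, $f^4$ is a monomorphism, and one of the following holds: (i) for $i=1,2,3$, $d_X^i$ is a weak cokernel of $d_X^{i-1}$ and $d_Y^i$ is a weak cokernel of $d_Y^{i-1}$; or (ii) for $i=0,1,2$, $d_X^i$ is a weak kernel of $d_X^{i+1}$ and $d_Y^i$ is a weak kernel of $d_Y^{i+1}$. Then $f^2$ is an isomorphism.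
   Context: A weak cokernel of $f:A\to B$ is a morphism $g:B\to C$ such that $\mathcal{M}(C,W)\to\mathcal{M}(B,W)\to\mathcal{M}(A,W)$ is exact for all $W$; a weak kernel of $g:B\to C$ is a morphism $f:A\to B$ such that $\mathcal{M}(W,A)\to\mathcal{M}(W,B)\to\mathcal{M}(W,C)$ is exact for all $W$. An $n$-abelian category is an idempotent complete additive category in which every morphism has an $n$-kernel and an $n$-cokernel, and in which every monomorphism (resp. epimorphism) together with any of its $n$-cokernels (resp. $n$-kernels) forms an $n$-exact sequence (here $n$-kernel/$n$-cokernel and $n$-exact are in the sense of Jasso: $X^0\to\cdots\to X^{n+1}$ is $n$-exact if $0\to\mathcal{M}(X^{n+1},W)\to\cdots\to\mathcal{M}(X^0,W)$ and $0\to\mathcal{M}(W,X^0)\to\cdots\to\mathcal{M}(W,X^{n+1})$ are exact for all $W$). *)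

From HB Require Import structures.
From mathcomp Require Import all_boot all_order all_algebra.
Set Implicit Arguments. Unset Strict Implicit. Unset Printing Implicit Defensive.
Import GRing.Theory.
Local Open Scope ring_scope.

Record PreaddCat := {
  Obj : Type;
  Mor : Obj -> Obj -> zmodType;
  idm : forall a, Mor a a;
  cmp : forall a b c, Mor b c -> Mor a b -> Mor a c;
  cmpA : forall a b c d (h : Mor c d) (g : Mor b c) (f : Mor a b),
      cmp h (cmp g f) = cmp (cmp h g) f;
  cmp1m : forall a b (f : Mor a b), cmp (idm b) f = f;
  cmpm1 : forall a b (f : Mor a b), cmp f (idm a) = f;
  cmpDl : forall a b c (g g' : Mor b c) (f : Mor a b),
      cmp (g + g') f = cmp g f + cmp g' f;
  cmpDr : forall a b c (g : Mor b c) (f f' : Mor a b),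
      cmp g (f + f') = cmp g f + cmp g f'
}.

Arguments idm {p} a.
Arguments cmp {p a b c} g f.
Arguments Mor {p} a b.

Unset Implicit Arguments.
Section CatDefs.
Context {C : PreaddCat}.

Definition is_mono {a b : Obj C} (f : Mor a b) :=
  forall w (x y : Mor w a), cmp f x = cmp f y -> x = y.
Definition is_epi {a b : Obj C} (f : Mor a b) :=
  forall w (x y : Mor b w), cmp x f = cmp y f -> x = y.
Definition is_iso {a b : Obj C} (f : Mor a b) :=
  exists g : Mor b a, cmp g f = idm a /\ cmp f g = idm b.

Definition has_zero_object :=
  exists z : Obj C, (forall x (f : Mor z x), f = 0) /\ (forall x (f : Mor x z), f = 0).
Definition has_biproducts :=
  forall a b : Obj C, exists (p : Obj C) (i1 : Mor a p) (i2 : Mor b p)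
    (p1 : Mor p a) (p2 : Mor p b),
    [/\ cmp p1 i1 = idm a, cmp p2 i2 = idm b, cmp p1 i2 = 0, cmp p2 i1 = 0
      & cmp i1 p1 + cmp i2 p2 = idm p].
Definition is_additive := has_zero_object /\ has_biproducts.

Definition idempotent_complete :=
  forall x (e : Mor x x), cmp e e = e ->
    exists (y : Obj C) (p : Mor x y) (s : Mor y x), cmp s p = e /\ cmp p s = idm y.

Definition weak_cokernel {a b c : Obj C} (g : Mor b c) (f : Mor a b) :=
  forall w (x : Mor b w), cmp x f = 0 <-> exists y : Mor c w, x = cmp y g.
Definition weak_kernel {a b c : Obj C} (f : Mor a b) (g : Mor b c) :=
  forall w (x : Mor w b), cmp g x = 0 <-> exists y : Mor w a, x = cmp f y.

(* Sequences X^0 -> X^1 -> ... indexed by nat; only the first n+2 terms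
   (X^0..X^{n+1}, maps d^0..d^n) are used. *)
(* exactness of  M(X^{i+2},W) -> M(X^{i+1},W) -> M(X^i,W) *)
Definition contra_exact_at (X : nat -> Obj C) (d : forall i, Mor (X i) (X i.+1)) i :=
  forall w (x : Mor (X i.+1) w), cmp x (d i) = 0 <->
    exists y : Mor (X i.+2) w, x = cmp y (d i.+1).
(* exactness of  M(W,X^i) -> M(W,X^{i+1}) -> M(W,X^{i+2}) *)
Definition co_exact_at (X : nat -> Obj C) (d : forall i, Mor (X i) (X i.+1)) i :=
  forall w (x : Mor w (X i.+1)), cmp (d i.+1) x = 0 <->
    exists y : Mor w (X i), x = cmp (d i) y.

(* (d^0,...,d^{n-1}) is an n-kernel of d^n (Jasso):
   0 -> M(W,X^0) -> ... -> M(W,X^n) -> M(W,X^{n+1}) exact *)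
Definition is_nkernel_seq (n : nat) (X : nat -> Obj C) (d : forall i, Mor (X i) (X i.+1)) :=
  is_mono (d 0%N) /\ forall i, (i < n)%N -> co_exact_at X d i.
(* (d^1,...,d^n) is an n-cokernel of d^0 (Jasso):
   0 -> M(X^{n+1},W) -> ... -> M(X^1,W) -> M(X^0,W) exact *)
Definition is_ncokernel_seq (n : nat) (X : nat -> Obj C) (d : forall i, Mor (X i) (X i.+1)) :=
  is_epi (d n) /\ forall i, (i < n)%N -> contra_exact_at X d i.
Definition is_nexact (n : nat) (X : nat -> Obj C) (d : forall i, Mor (X i) (X i.+1)) := is_nkernel_seq n X d /\ is_ncokernel_seq n X d.

Definition castHom {a b a' b' : Obj C} (ea : a = a') (eb : b = b') (f : Mor a b)
  : Mor a' b' := match ea, eb with erefl, erefl => f end.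

Definition has_nkernel (n : nat) {A B : Obj C} (f : Mor A B) :=
  exists (X : nat -> Obj C) (d : forall i, Mor (X i) (X i.+1))
    (eA : X n = A) (eB : X n.+1 = B),
    castHom eA eB (d n) = f /\ is_nkernel_seq n X d.
Definition has_ncokernel (n : nat) {A B : Obj C} (f : Mor A B) :=
  exists (X : nat -> Obj C) (d : forall i, Mor (X i) (X i.+1))
    (eA : X 0%N = A) (eB : X 1%N = B),
    castHom eA eB (d 0%N) = f /\ is_ncokernel_seq n X d.

Definition n_abelian (n : nat) :=
  [/\ (0 < n)%N, is_additive /\ idempotent_complete,
      (forall A B (f : Mor A B), has_nkernel n f /\ has_ncokernel n f),
      (forall (X : nat -> Obj C) (d : forall i, Mor (X i) (X i.+1)), is_mono (d 0%N) -> is_ncokernel_seq n X d -> is_nexact n X d)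
    & (forall (X : nat -> Obj C) (d : forall i, Mor (X i) (X i.+1)), is_epi (d n) -> is_nkernel_seq n X d -> is_nexact n X d)].

End CatDefs.

(** Proof idea: only the additive structure is used.  In the weak-cokernel case, [dX1 i1] kills
    [dY0] (as [f0] is epi), so [dX1 i1 = c' dY1]; then [idm X2 - c' f2] kills
    [dX1] and factors as [b dX2], which makes [c' + b i3 dY2] a retraction [g]
    of [f2].  The idempotent [e := idm Y2 - f2 g] kills [f2], hence [dY1], so
    [e = y dY2]; pushing through [f3] and [dX3] (using [f4] mono) gives
    [e = e e = 0].  The weak-kernel case is the same statement in the opposite
    category. *)
From HB Require Import structures.
From mathcomp Require Import all_boot all_order all_algebra.
Import GRing.Theory.
Local Open Scope ring_scope.

Section Preadditive.
Variable C : PreaddCat.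
Implicit Types a b c : Obj C.

Lemma cmp0l a b c (f : Mor a b) : cmp (0 : Mor b c) f = 0.
Proof. by apply: (@addrI _ (cmp 0 f)); rewrite -cmpDl !addr0. Qed.

Lemma cmp0r a b c (g : Mor b c) : cmp g (0 : Mor a b) = 0.
Proof. by apply: (@addrI _ (cmp g 0)); rewrite -cmpDr !addr0. Qed.

Lemma cmpBl a b c (g g' : Mor b c) (f : Mor a b) :
  cmp (g - g') f = cmp g f - cmp g' f.
Proof. by apply: (@addIr _ (cmp g' f)); rewrite -cmpDl !subrK. Qed.

Lemma cmpBr a b c (g : Mor b c) (f f' : Mor a b) :
  cmp g (f - f') = cmp g f - cmp g f'.
Proof. by apply: (@addIr _ (cmp g f')); rewrite -cmpDr !subrK. Qed.

Lemma weak_cokernel_cmp_eq0 a b c (g : Mor b c) (f : Mor a b) :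
  weak_cokernel g f -> cmp g f = 0.
Proof. by move=> wg; apply/(wg _ g); exists (idm c); rewrite cmp1m. Qed.

Definition opCat : PreaddCat.
Proof.
refine (@Build_PreaddCat (Obj C) (fun a b => Mor b a) (fun a => idm a)
  (fun a b c g f => cmp f g) _ _ _ _ _).
- by move=> a b c d h g f; rewrite cmpA.
- by move=> a b f; rewrite cmpm1.
- by move=> a b f; rewrite cmp1m.
- by move=> a b c g g' f; rewrite cmpDr.
- by move=> a b c g f f'; rewrite cmpDl.
Defined.

Lemma is_iso_op a b (f : Mor a b) : is_iso f -> @is_iso opCat b a f.
Proof. by case=> g [gf fg]; exists g. Qed.

End Preadditive.

Arguments weak_cokernel_cmp_eq0 {C a b c g f}.
Arguments is_iso_op {C a b f}.

Section FiveLemmaWeakCokernel.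
Context {C : PreaddCat} {X0 X1 X2 X3 X4 Y0 Y1 Y2 Y3 Y4 : Obj C}.
Context {dX0 : Mor X0 X1} {dX1 : Mor X1 X2} {dX2 : Mor X2 X3} {dX3 : Mor X3 X4}.
Context {dY0 : Mor Y0 Y1} {dY1 : Mor Y1 Y2} {dY2 : Mor Y2 Y3} {dY3 : Mor Y3 Y4}.
Context {f0 : Mor X0 Y0} {f1 : Mor X1 Y1} {f2 : Mor X2 Y2}.
Context {f3 : Mor X3 Y3} {f4 : Mor X4 Y4}.
Hypotheses (c0 : cmp f1 dX0 = cmp dY0 f0) (c1 : cmp f2 dX1 = cmp dY1 f1).
Hypotheses (c2 : cmp f3 dX2 = cmp dY2 f2) (c3 : cmp f4 dX3 = cmp dY3 f3).

Lemma weak_cokernel_five_retraction {i1 : Mor Y1 X1} {i3 : Mor Y3 X3} :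
  cmp i1 f1 = idm X1 -> cmp i3 f3 = idm X3 -> is_epi f0 ->
  weak_cokernel dX1 dX0 -> weak_cokernel dX2 dX1 -> weak_cokernel dY1 dY0 ->
  exists g : Mor Y2 X2, cmp g f2 = idm X2.
Proof.
move=> i1f1 i3f3 epi0 wX1 wX2 wY1.
have dX1_i1_dY0 : cmp (cmp dX1 i1) dY0 = 0.
  apply: epi0; rewrite cmp0l -cmpA -c0 cmpA -(cmpA _ i1) i1f1 cmpm1.
  exact: weak_cokernel_cmp_eq0.
have [c' dX1_i1] := (wY1 _ _).1 dX1_i1_dY0.
have : cmp (idm X2 - cmp c' f2) dX1 = 0.
  by rewrite cmpBl cmp1m -cmpA c1 cmpA -dX1_i1 -cmpA i1f1 cmpm1 subrr.
case/(wX2 _ _) => b Eb.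
exists (c' + cmp (cmp b i3) dY2).
by rewrite cmpDl -!cmpA -c2 (cmpA i3) i3f3 cmp1m -Eb addrC subrK.
Qed.

Lemma weak_cokernel_five_section {g : Mor Y2 X2} {j1 : Mor Y1 X1} {i3 : Mor Y3 X3} :
  cmp g f2 = idm X2 -> cmp f1 j1 = idm Y1 -> cmp f3 i3 = idm Y3 -> is_mono f4 ->
  weak_cokernel dX3 dX2 -> weak_cokernel dY2 dY1 -> weak_cokernel dY3 dY2 ->
  cmp f2 g = idm Y2.
Proof.
move=> gf2 f1j1 f3i3 mono4 wX3 wY2 wY3.
pose e := idm Y2 - cmp f2 g.
have e_f2 : cmp e f2 = 0 by rewrite cmpBl cmp1m -cmpA gf2 cmpm1 subrr.
have e_idem : cmp e e = e.
  by rewrite /e !(cmpBl, cmpBr) !cmp1m cmpm1 -!cmpA (cmpA g) gf2 cmp1m subrr subr0.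
have e_dY1 : cmp e dY1 = 0.
  rewrite -[dY1]cmpm1 -f1j1 !cmpA -(cmpA e) -c1 cmpA e_f2.
  by rewrite !cmp0l.
have [y Ey] := (wY2 _ _).1 e_dY1.
have : cmp (cmp y f3) dX2 = 0 by rewrite -cmpA c2 cmpA -Ey e_f2.
case/(wX3 _ _) => z Ez.
have dX3_i3_dY2_e : cmp dX3 (cmp i3 (cmp dY2 e)) = 0.
  apply: mono4; rewrite cmp0r cmpA c3 -cmpA (cmpA f3) f3i3 cmp1m cmpA.
  by rewrite (weak_cokernel_cmp_eq0 wY3) cmp0l.
have e0 : e = 0.
  rewrite -e_idem {1}Ey -cmpA -[cmp dY2 e]cmp1m -f3i3 -cmpA cmpA Ez -cmpA.
  by rewrite dX3_i3_dY2_e cmp0r.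
by apply/eqP; rewrite eq_sym -subr_eq0 -/e e0.
Qed.

Lemma weak_cokernel_five_lemma :
  is_iso f1 -> is_iso f3 -> is_epi f0 -> is_mono f4 ->
  weak_cokernel dX1 dX0 -> weak_cokernel dX2 dX1 -> weak_cokernel dX3 dX2 ->
  weak_cokernel dY1 dY0 -> weak_cokernel dY2 dY1 -> weak_cokernel dY3 dY2 ->
  is_iso f2.
Proof.
move=> [i1 [i1f1 f1i1]] [i3 [i3f3 f3i3]] epi0 mono4 wX1 wX2 wX3 wY1 wY2 wY3.
have [g gf2] := weak_cokernel_five_retraction i1f1 i3f3 epi0 wX1 wX2 wY1.
by exists g; split; last exact: (weak_cokernel_five_section gf2 f1i1 f3i3).
Qed.

End FiveLemmaWeakCokernel.

Theorem mainTheorem10 (n : nat) (C : PreaddCat) (HC : @n_abelian C n)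
  (X0 X1 X2 X3 X4 Y0 Y1 Y2 Y3 Y4 : Obj C)
  (dX0 : Mor X0 X1) (dX1 : Mor X1 X2) (dX2 : Mor X2 X3) (dX3 : Mor X3 X4)
  (dY0 : Mor Y0 Y1) (dY1 : Mor Y1 Y2) (dY2 : Mor Y2 Y3) (dY3 : Mor Y3 Y4)
  (f0 : Mor X0 Y0) (f1 : Mor X1 Y1) (f2 : Mor X2 Y2) (f3 : Mor X3 Y3) (f4 : Mor X4 Y4)
  (c0 : cmp f1 dX0 = cmp dY0 f0) (c1 : cmp f2 dX1 = cmp dY1 f1)
  (c2 : cmp f3 dX2 = cmp dY2 f2) (c3 : cmp f4 dX3 = cmp dY3 f3)
  (iso1 : is_iso f1) (iso3 : is_iso f3) (epi0 : is_epi f0) (mono4 : is_mono f4)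
  (H : (weak_cokernel dX1 dX0 /\ weak_cokernel dX2 dX1 /\ weak_cokernel dX3 dX2 /\
        weak_cokernel dY1 dY0 /\ weak_cokernel dY2 dY1 /\ weak_cokernel dY3 dY2)
    \/ (weak_kernel dX0 dX1 /\ weak_kernel dX1 dX2 /\ weak_kernel dX2 dX3 /\
        weak_kernel dY0 dY1 /\ weak_kernel dY1 dY2 /\ weak_kernel dY2 dY3)) :
  is_iso f2.
Proof.
case: H => [[wX1 [wX2 [wX3 [wY1 [wY2 wY3]]]]] | [wX0 [wX1 [wX2 [wY0 [wY1 wY2]]]]]].
  exact: (weak_cokernel_five_lemma c0 c1 c2 c3).
(* In [opCat C] the weak kernels become weak cokernels and the rows are read backwards. *)
have [g [gf2 f2g]] := weak_cokernel_five_lemma (C := opCat C)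
  (esym c3) (esym c2) (esym c1) (esym c0) (is_iso_op iso3) (is_iso_op iso1)
  mono4 epi0 wY2 wY1 wY0 wX2 wX1 wX0.
by exists g.
Qed.
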